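(* For every integer $n>24$, the generalized Petersen graph $GP(n,4)$ is not $\ell$-distance-balanced for any integer $\ell$ with $3\le \ell<{\rm diam}(GP(n,4))$.
   Context: For a connected graph $G$ and $x,y\in V(G)$, $d_G(x,y)$ denotes the distance and ${\rm diam}(G)$ the diameter. Let $W_{xy}=\{w\in V(G): d_G(w,x)<d_G(w,y)\}$. $G$ is called $\ell$-distance-balanced if $|W_{xy}|=|W_{yx}|$ for every pair $x,y\in V(G)$ with $d_G(x,y)=\ell$. For integers $n\ge 3$ and $1\le k<n/2$, the generalized Petersen graph $GP(n,k)$ has vertex set $\{u_i: i\in\mathbb{Z}_n\}\cup\{v_i: i\in\mathbb{Z}_n\}$ and edge set $\{u_iu_{i+1}: i\in\mathbb{Z}_n\}\cup\{v_iv_{i+k}: i\in\mathbb{Z}_n\}\cup\{u_iv_i: i\in\mathbb{Z}_n\}$. *)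

From mathcomp Require Import all_boot.
Set Implicit Arguments. Unset Strict Implicit. Unset Printing Implicit Defensive.

Section GraphDist.
Variable T : finType.
Variable e : rel T.

Fixpoint ball (m : nat) (x : T) : {set T} :=
  match m with
  | 0 => [set x]
  | m'.+1 => ball m' x :|: [set y | [exists z in ball m' x, e z y]]
  end.

(* graph distance: least m with y in ball m x (any finite distance is < #|T|);
   for unreachable y the value is #|T| (irrelevant for connected graphs) *)
Definition dist (x y : T) : nat := find (fun m => y \in ball m x) (iota 0 #|T|).

Definition diam : nat := \max_(x : T) \max_(y : T) dist x y.

Definition W (x y : T) : {set T} := [set w | dist w x < dist w y].

Definition dist_balanced (l : nat) : Prop :=
  forall x y : T, dist x y = l -> #|W x y| = #|W y x|.
End GraphDist.

(* Generalized Petersen graph GP(n,k): vertex (false,i) is u_i, (true,i) is v_i. *)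
Definition GPvert (n : nat) := (bool * 'I_n)%type.


Definition GP (n k : nat) : rel (GPvert n) := fun a b =>
  let i := val a.2 in let j := val b.2 in
  match a.1, b.1 with
  | false, false => (j == (i + 1) %% n) || (i == (j + 1) %% n)
  | true, true => (j == (i + k) %% n) || (i == (j + k) %% n)
  | _, _ => i == j
  end.
Arguments GP : clear implicits.

From mathcomp Require Import zify.
From mathcomp Require Import all_boot.
Set Implicit Arguments. Unset Strict Implicit. Unset Printing Implicit Defensive.

(* Distances in GP(n,4) have a closed form: the distance from (b,i) to (c,j) is
   min (δ_bc z) (δ_bc (n - z)) with z = |i - j|, where δ_bc z is the distance from
   (b,0) to (c,z) in the infinite graph GP(∞,4), essentially z/4 plus a correction
   depending on z mod 4.  After rotating the source to index 0, the formula is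
   recognised as the distance because it vanishes only at the source, grows by at
   most 1 along edges and decreases along some edge at every other vertex.
   Given 3 <= l < diam, pick j with d(u_0, v_j) = l.  Outside two windows of 11
   indices around j/2 and around the antipodal index (n+j)/2 the closed form
   decides at once which of u_0, v_j a vertex is nearer to; inside the windows
   the comparison is periodic in j and in n (period 8) and stabilises for large j,
   so finitely many cases, checked by computation, give |W_{u_0 v_j}| < |W_{v_j u_0}|.
   For n < 80 the same inequality is checked directly. *)

Lemma find_iota_leq k s N : s <= k < s + N -> find (fun m => k <= m) (iota s N) = k - s.
Proof.
elim: N s => [|N IH] s /=; first lia.
by move=> ?; case: ifP => ?; [|rewrite IH]; lia.
Qed.

Section Potential.
Variables (T : finType) (e : rel T) (x0 : T) (f : T -> nat).
Hypotheses (f_eq0 : forall x, (f x == 0) = (x == x0))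
  (f_edge : forall x y, e x y -> f y <= (f x).+1)
  (f_descent : forall y, 0 < f y -> exists2 x, e x y & (f x).+1 = f y)
  (f_lt_card : forall x, f x < #|T|).

Lemma mem_ball_potential m y : (y \in ball e m x0) = (f y <= m).
Proof.
elim: m y => [|m IH] y /=; first by rewrite in_set1 leqn0 f_eq0.
rewrite in_setU in_set IH; apply/idP/idP.
  case/orP => [|/existsP [z /andP [z_ball zy]]]; first lia.
  by rewrite IH in z_ball; have := f_edge zy; lia.
case: (leqP (f y) m) => // lt_m_fy le_fy_Sm.
have [x xy fx] := f_descent (leq_ltn_trans (leq0n m) lt_m_fy).
by apply/orP; right; apply/existsP; exists x; rewrite IH xy andbT; lia.
Qed.

Lemma dist_potential y : dist e x0 y = f y.
Proof.
rewrite /dist (eq_find (a2 := fun m => f y <= m)) => [|m]; last exact: mem_ball_potential.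
by rewrite find_iota_leq ?subn0 // f_lt_card.
Qed.

End Potential.

Section Automorphism.
Variables (T : finType) (e : rel T) (sigma tau : T -> T).
Hypotheses (sigmaK : cancel sigma tau) (tauK : cancel tau sigma)
  (sigma_edge : forall x y, e (sigma x) (sigma y) = e x y).

Lemma mem_ball_morph m x y : (sigma y \in ball e m (sigma x)) = (y \in ball e m x).
Proof.
elim: m y => [|m IH] y /=; first by rewrite !in_set1 (can_eq sigmaK).
rewrite !in_setU !in_set IH; congr orb; apply/existsP/existsP => [[z]|[z]].
  by rewrite -[z]tauK IH sigma_edge; exists (tau z).
by rewrite -IH -sigma_edge; exists (sigma z).
Qed.

Lemma dist_morph x y : dist e (sigma x) (sigma y) = dist e x y.
Proof. by apply: eq_find => m; rewrite mem_ball_morph. Qed.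

End Automorphism.

Lemma eventually_periodic (A : Type) (f : nat -> A) a p :
  (forall x, a <= x -> f (x + p) = f x) -> forall x, a <= x -> f x = f (a + (x - a) %% p).
Proof.
move=> per x a_le.
rewrite {1}(_ : x = a + (x - a) %% p + (x - a) %/ p * p); last first.
  by rewrite -addnA (addnC ((x - a) %% p)) -divn_eq subnKC.
elim: ((x - a) %/ p) => [|k IH]; first by rewrite mul0n addn0.
by rewrite mulSn (addnC p) addnA per ?IH // -addnA leq_addr.
Qed.

Lemma modn_lt_double x n : x < n + n -> x < n /\ x %% n = x \/ n <= x /\ x %% n = x - n.
Proof.
move=> x_lt; case: (ltnP x n) => x_n; first by left; rewrite modn_small.
by right; rewrite -{1}(subnK x_n) modnDr modn_small //; lia.
Qed.

Lemma count_iota_cut (P : pred nat) s t u : s <= t <= u ->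
  count P (iota s (u - s)) = count P (iota s (t - s)) + count P (iota t (u - t)).
Proof.
case/andP=> st tu; rewrite -count_cat -{2}(subnKC st) -iotaD.
by congr (count P (iota s _)); lia.
Qed.

Lemma count_iota_all (P : pred nat) s m :
  (forall i, s <= i < s + m -> P i) -> count P (iota s m) = m.
Proof.
move=> all_P; rewrite -{2}(size_iota s m); apply/eqP; rewrite -all_count.
by apply/allP => i; rewrite mem_iota; apply: all_P.
Qed.

Lemma count_iota_none (P : pred nat) s m :
  (forall i, s <= i < s + m -> ~~ P i) -> count P (iota s m) = 0.
Proof.
move=> no_P; apply/eqP; rewrite -leqn0 leqNgt -has_count.
by apply/hasPn => i; rewrite mem_iota; apply: no_P.
Qed.

Definition stride (k : nat) (c : bool) : nat := if c then k else 1.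

(* ladder_dist b c z is the distance from (b,0) to (c,z) in GP(∞,4), the graph
   on bool * int with the edges of GP(n,4) taken without reduction mod n. *)
Definition ladder_dist (b c : bool) (z : nat) : nat :=
  match b, c with
  | false, false => minn z (z %/ 4 + 2 + minn (z %% 4) 2)
  | true, true => z %/ 4 + 2 * minn (z %% 4) 1 + minn (z %% 4) 2
  | _, _ => z %/ 4 + 1 + minn (z %% 4) 2
  end.

(* A step towards (b,0) in GP(∞,4), positions being folded by |.|: on the inner
   rim, z' + z = 4 is the step over the origin. *)
Definition ladder_move (c c' : bool) (z z' : nat) : Prop :=
  if c == c' then (if c then z' + 4 = z \/ z' + z = 4 else z' + 1 = z \/ z' = z + 1)
  else z' = z.

Lemma ladder_dist_step b c z z' :
  z' = z + stride 4 c \/ z = z' + stride 4 c \/ z + z' = stride 4 c ->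
  ladder_dist b c z' <= (ladder_dist b c z).+1.
Proof. by case: b; case: c => /=; lia. Qed.

Lemma ladder_dist_spoke b c z : ladder_dist b (~~ c) z <= (ladder_dist b c z).+1.
Proof. by case: b; case: c => /=; lia. Qed.

Lemma ladder_dist_descent b c z : 0 < ladder_dist b c z ->
  exists c' z', ladder_move c c' z z' /\ (ladder_dist b c' z').+1 = ladder_dist b c z.
Proof.
rewrite /ladder_move; case: b; case: c => /= pos.
- have [r0|r_pos] := posnP (z %% 4).
  + by exists true, (z - 4) => /=; lia.
  + by exists false, z => /=; lia.
- have [r0|[r12|r3]] : z %% 4 = 0 \/ (z %% 4 = 1 \/ z %% 4 = 2) \/ z %% 4 = 3 by lia.
  + by exists true, z => /=; lia.
  + by exists false, (z - 1) => /=; lia.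
  + by exists false, (z + 1) => /=; lia.
- have [z_ge4|[z3|z_le2]] : 4 <= z \/ z = 3 \/ z <= 2 by lia.
  + by exists true, (z - 4) => /=; lia.
  + by exists true, 1 => /=; lia.
  + by exists false, z => /=; lia.
- case: (leqP z (z %/ 4 + 2 + minn (z %% 4) 2)) => rim_shorter.
  + by exists false, (z - 1) => /=; lia.
  + by exists true, z => /=; lia.
Qed.

Lemma ladder_dist_eq0 b c z : (ladder_dist b c z == 0) = (b == c) && (z == 0).
Proof. by case: b; case: c => /=; lia. Qed.

Lemma ladder_dist_small b c z : z <= 4 -> ladder_dist b c z <= 4.
Proof. by case: b; case: c => /=; lia. Qed.

Lemma ladder_dist_lb b c z : z <= 4 * ladder_dist b c z + 3.
Proof. by case: b; case: c => /=; lia. Qed.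

Lemma ladder_dist_ub b c z : 4 * ladder_dist b c z <= z + 16.
Proof. by case: b; case: c => /=; lia. Qed.

Lemma ladder_dist_shift b c z : 4 <= z -> ladder_dist b c (z + 4) = (ladder_dist b c z).+1.
Proof. by case: b; case: c => /=; lia. Qed.

Lemma ladder_dist_lt b c z z' : z + 11 <= z' -> ladder_dist b c z < ladder_dist b (~~ c) z'.
Proof. by case: b; case: c => /=; lia. Qed.

Lemma ladder_dist_lt8 b c z : ladder_dist b c z < ladder_dist b (~~ c) (z + 8).
Proof. by case: b; case: c => /=; lia. Qed.

Lemma ladder_dist_le_add20 b c z z' : z + 20 <= z' -> ladder_dist b c z <= ladder_dist b c z'.
Proof. by move=> ?; have := ladder_dist_ub b c z; have := ladder_dist_lb b c z'; lia. Qed.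

Definition gp4_dist (n : nat) (b c : bool) (z : nat) : nat :=
  minn (ladder_dist b c z) (ladder_dist b c (n - z)).

Definition distn (i j : nat) : nat := (i - j) + (j - i).

Lemma gp4_dist_subn n b c z : z <= n -> gp4_dist n b c (n - z) = gp4_dist n b c z.
Proof. by move=> ?; rewrite /gp4_dist subKn // minnC. Qed.

Lemma gp4_dist_near n b c z : z + 20 <= n - z -> gp4_dist n b c z = ladder_dist b c z.
Proof. by move/(ladder_dist_le_add20 b c)/minn_idPl. Qed.

Lemma gp4_dist_far n b c z : n - z + 20 <= z -> gp4_dist n b c z = ladder_dist b c (n - z).
Proof. by move/(ladder_dist_le_add20 b c)/minn_idPr. Qed.

Lemma gp4_dist_bound n b c z : 24 <= n -> z < n -> gp4_dist n b c z <= (n + 4) %/ 8 + 3.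
Proof. by rewrite /gp4_dist; case: b; case: c => /=; lia. Qed.

Lemma gp4_dist_rim n b c w w' : 24 <= n -> w < n -> w' < n ->
  (w' == (w + stride 4 c) %% n) || (w == (w' + stride 4 c) %% n) ->
  gp4_dist n b c w' <= (gp4_dist n b c w).+1.
Proof.
move=> n_ge24 w_lt w'_lt adj.
have s_le4 : stride 4 c <= 4 by rewrite /stride; case: ifP.
have {adj} : w' = w + stride 4 c \/ w' + n = w + stride 4 c \/
             w = w' + stride 4 c \/ w + n = w' + stride 4 c.
  have [[? E]|[? E]] := @modn_lt_double (w + stride 4 c) n ltac:(lia);
  have [[? E']|[? E']] := @modn_lt_double (w' + stride 4 c) n ltac:(lia);
  by move: adj; rewrite E E'; lia.
have step := @ladder_dist_step b c.
rewrite /gp4_dist; case=> [E|[E|[E|E]]].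
- by have := step w w' ltac:(lia); have := step (n - w) (n - w') ltac:(lia); lia.
- have := step (n - w) w' ltac:(lia); have := @ladder_dist_small b c w' ltac:(lia).
  by have := ladder_dist_lb b c w; lia.
- by have := step w w' ltac:(lia); have := step (n - w) (n - w') ltac:(lia); lia.
- have := step w (n - w') ltac:(lia); have := @ladder_dist_small b c (n - w') ltac:(lia).
  by have := ladder_dist_lb b c (n - w); lia.
Qed.

Lemma gp4_dist_spoke n b c w : gp4_dist n b (~~ c) w <= (gp4_dist n b c w).+1.
Proof.
rewrite /gp4_dist; have := ladder_dist_spoke b c w.
by have := ladder_dist_spoke b c (n - w); lia.
Qed.

Lemma GP_sym n k : symmetric (GP n k).
Proof. by case=> [[] i] [[] j]; rewrite /GP /= 1?orbC // eq_sym. Qed.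

Section Rotation.
Variables (n k : nat).
Hypothesis n_gt0 : 0 < n.

Definition gp_rot (m : nat) (v : GPvert n) : GPvert n :=
  (v.1, Ordinal (ltn_pmod (v.2 + m) n_gt0)).

Lemma gp_rotK m : m <= n -> cancel (gp_rot m) (gp_rot (n - m)).
Proof.
move=> m_le [b i]; congr pair; apply: val_inj => /=.
by rewrite modnDml -addnA subnKC // modnDr modn_small.
Qed.

Lemma GP_rot m : {mono gp_rot m : a c / GP n k a c}.
Proof.
have shift (x : 'I_n) y : ((x + m) %% n == (y + m) %% n) = (val x == y %% n).
  by rewrite eqn_modDr modn_small.
case=> [b i] [b' i']; rewrite /GP /=.
by case: b b' => [] [] /=; rewrite ?modnDml ?(addnAC _ m) ?shift // modn_small.
Qed.

Lemma GP_rot_stride b (i : 'I_n) : GP n k (b, i) (gp_rot (stride k b) (b, i)).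
Proof. by case: b; rewrite /GP /= eqxx. Qed.

Lemma GP_rim_succ b (i : 'I_n) : stride k b <= n ->
  exists2 j : 'I_n, GP n k (b, j) (b, i) & j = i + stride k b :> nat \/ j + n = i + stride k b.
Proof.
move=> s_le; exists (gp_rot (stride k b) (b, i)).2; first by rewrite GP_sym GP_rot_stride.
by have := ltn_ord i; have := @modn_lt_double (i + stride k b) n; rewrite /=; lia.
Qed.

Lemma GP_rim_pred b (i : 'I_n) : stride k b <= n ->
  exists2 j : 'I_n, GP n k (b, j) (b, i) & j + stride k b = i \/ j + stride k b = i + n.
Proof.
move=> s_le; exists (gp_rot (n - stride k b) (b, i)).2.
  have := @gp_rotK (n - stride k b) ltac:(lia) (b, i).
  by rewrite subKn // => {2}<-; apply: GP_rot_stride.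
by have := ltn_ord i; have := @modn_lt_double (i + (n - stride k b)) n; rewrite /=; lia.
Qed.

End Rotation.

Section GP4.
Variable n : nat.
Hypothesis n_ge24 : 24 <= n.

Let n_gt0 : 0 < n. Proof. exact: leq_trans n_ge24. Qed.

Lemma gp4_dist_edge b0 (a a' : GPvert n) :
  GP n 4 a a' -> gp4_dist n b0 a'.1 a'.2 <= (gp4_dist n b0 a.1 a.2).+1.
Proof.
case: a a' => [c i] [c' i'] /=; rewrite /GP /=.
case: c c' => [] [] /= adj; first exact: (@gp4_dist_rim _ _ true).
- by rewrite -(eqP adj); apply: (gp4_dist_spoke _ _ true).
- by rewrite -(eqP adj); apply: (gp4_dist_spoke _ _ false).
- exact: (@gp4_dist_rim _ _ false).
Qed.

Lemma ladder_move_lift c c' z z' (i : 'I_n) :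
  ladder_move c c' z z' -> z = i \/ (z + i = n /\ 0 < i) ->
  exists2 i' : 'I_n, GP n 4 (c', i') (c, i) & z' = i' \/ z' + i' = n.
Proof.
have i_lt := ltn_ord i.
rewrite /ladder_move; have [<-|ne_cc'] := eqVneq c c'; rewrite ?eqxx => move_z z_i; last first.
  exists i; last lia.
  by move: ne_cc'; case: c c' {move_z} => [] []; rewrite /GP //= eqxx.
have s_le : stride 4 c <= n by case: (c) => /=; lia.
have [fwd fwd_edge fwd_val] := GP_rim_succ n_gt0 i s_le.
have [bwd bwd_edge bwd_val] := GP_rim_pred n_gt0 i s_le.
have fwd_lt := ltn_ord fwd; have bwd_lt := ltn_ord bwd.
case: c s_le move_z fwd_edge bwd_edge fwd_val bwd_val
  => /= _ move_z fwd_edge bwd_edge fwd_val bwd_val.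
all: case: z_i => z_i; case: move_z => move_z.
all: first [ by exists fwd; last lia | by exists bwd; last lia ].
Qed.

Lemma gp4_dist_descent b0 (v : GPvert n) : 0 < gp4_dist n b0 v.1 v.2 ->
  exists2 a : GPvert n, GP n 4 a v & (gp4_dist n b0 a.1 a.2).+1 = gp4_dist n b0 v.1 v.2.
Proof.
case: v => c i /= pos; have i_lt := ltn_ord i.
have [z z_i z_min] : exists2 z : nat, z = i \/ (z + i = n /\ 0 < i) &
    gp4_dist n b0 c i = ladder_dist b0 c z.
  rewrite /gp4_dist; case: (leqP (ladder_dist b0 c i) (ladder_dist b0 c (n - i))) => min_i.
    by exists (nat_of_ord i); [left | lia].
  exists (n - i); last lia.
  right; split; first lia.
  move: min_i; case: (posnP i) => [-> | //]; rewrite subn0.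
  by have := @ladder_dist_small b0 c 0 isT; have := ladder_dist_lb b0 c n; lia.
rewrite z_min in pos.
have [c' [z' [move_z z'_desc]]] := ladder_dist_descent pos.
have [i' edge z'_i'] := ladder_move_lift move_z z_i.
exists (c', i') => //=.
have := gp4_dist_edge b0 edge; rewrite /= z_min -z'_desc.
suff : gp4_dist n b0 c' i' <= ladder_dist b0 c' z' by lia.
have [->|->] : z' = i' \/ z' = n - i' by lia.
all: by rewrite geq_min leqnn ?orbT.
Qed.

Lemma gp4_dist_eq0 b0 (v : GPvert n) :
  (gp4_dist n b0 v.1 v.2 == 0) = (v == (b0, Ordinal n_gt0)).
Proof.
case: v => c i; rewrite /gp4_dist /= xpair_eqE -val_eqE /=.
have := ladder_dist_eq0 b0 c i; have := ladder_dist_eq0 b0 c (n - i); have := ltn_ord i.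
by rewrite (eq_sym c); case: (b0 == c) => /=; lia.
Qed.

Lemma dist_GP4_origin b0 (v : GPvert n) :
  dist (GP n 4) (b0, Ordinal n_gt0) v = gp4_dist n b0 v.1 v.2.
Proof.
apply: (@dist_potential _ (GP n 4) _ (fun w => gp4_dist n b0 w.1 w.2)) => [w|a a'|w|[c i]].
- exact: gp4_dist_eq0.
- exact: gp4_dist_edge.
- exact: gp4_dist_descent.
- rewrite card_prod card_bool card_ord /gp4_dist.
  by have := ladder_dist_ub b0 c i; have := ltn_ord i; rewrite /=; lia.
Qed.

Lemma dist_GP4 (a c : GPvert n) : dist (GP n 4) a c = gp4_dist n a.1 c.1 (distn a.2 c.2).
Proof.
case: a c => [b0 i0] [b i] /=; have i0_lt := ltn_ord i0; have i_lt := ltn_ord i.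
have rot_i0K : cancel (gp_rot n_gt0 (n - i0)) (gp_rot n_gt0 i0).
  by have := @gp_rotK _ n_gt0 (n - i0) (leq_subr _ _); rewrite subKn // ltnW.
rewrite -(dist_morph rot_i0K (@gp_rotK _ n_gt0 i0 (ltnW i0_lt)) (GP_rot 4 n_gt0 (n - i0))).
have -> : gp_rot n_gt0 (n - i0) (b0, i0) = (b0, Ordinal n_gt0).
  by congr pair; apply: val_inj; rewrite /= subnKC ?modnn // ltnW.
rewrite dist_GP4_origin /=.
have [[lt_n ->]|[ge_n ->]] := @modn_lt_double (i + (n - i0)) n ltac:(lia).
  by rewrite -gp4_dist_subn; [congr (gp4_dist _ _ _ _) | ]; rewrite /distn; lia.
by congr (gp4_dist _ _ _ _); rewrite /distn; lia.
Qed.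

End GP4.

(* nearer ltn n j b i: the vertex (b,i) is strictly nearer to u_0 than to v_j;
   nearer gtn n j b i: strictly nearer to v_j. *)
Definition nearer (r : rel nat) (n j : nat) (b : bool) (i : nat) : bool :=
  r (gp4_dist n b false i) (gp4_dist n b true (distn i j)).

Definition near_count (r : rel nat) (n j : nat) : nat :=
  count (nearer r n j false) (iota 0 n) + count (nearer r n j true) (iota 0 n).

Lemma nearer_gtn_ltnN n j b i : nearer gtn n j b i -> ~~ nearer ltn n j b i.
Proof. by rewrite /nearer /= -leqNgt => /ltnW. Qed.

Lemma nearer_ltn_gtnN n j b i : nearer ltn n j b i -> ~~ nearer gtn n j b i.
Proof. by rewrite /nearer /= -leqNgt => /ltnW. Qed.

Definition admissible (j : nat) : bool := (j == 8) || (11 <= j).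

Section Bulk.
Variables (n j : nat) (b : bool).
Hypotheses (adm_j : admissible j) (j_le : j + 11 <= n).

Lemma nearer_u0_low i : i < j %/ 2 - 5 -> nearer ltn n j b i.
Proof.
move=> i_lt; rewrite /nearer /gp4_dist /distn.
have -> : i - j + (j - i) = j - i by lia.
have /= := @ladder_dist_lt b false i (j - i) ltac:(lia).
have /= := @ladder_dist_lt b false i (n - (j - i)) ltac:(lia).
lia.
Qed.

Lemma nearer_vj_mid i :
  i < n -> j %/ 2 + 6 <= i -> i + 5 < (n + j) %/ 2 -> nearer gtn n j b i.
Proof.
move=> i_lt i_ge i_le; rewrite /nearer /gtn /= /gp4_dist /distn.
case: (leqP i j) => i_j.
  have -> : i - j + (j - i) = j - i by lia.
  have /= := @ladder_dist_lt b true (j - i) i ltac:(lia).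
  have /= := @ladder_dist_lt b true (j - i) (n - i) ltac:(lia).
  lia.
have -> : i - j + (j - i) = i - j by lia.
have /= := @ladder_dist_lt b true (i - j) (n - i) ltac:(lia).
case/orP: adm_j => [/eqP j8 | j_ge].
  have /= := ladder_dist_lt8 b true (i - j).
  by rewrite j8 subnK; lia.
have /= := @ladder_dist_lt b true (i - j) i ltac:(lia).
lia.
Qed.

Lemma nearer_u0_high i : i < n -> (n + j) %/ 2 + 6 <= i -> nearer ltn n j b i.
Proof.
move=> i_lt i_ge; rewrite /nearer /gp4_dist /distn.
have -> : i - j + (j - i) = i - j by lia.
have /= := @ladder_dist_lt b false (n - i) (i - j) ltac:(lia).
case/orP: adm_j => [/eqP j8 | j_ge].
  have /= := ladder_dist_lt8 b false (n - i).
  by rewrite (_ : n - i + 8 = n - (i - j)); lia.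
have /= := @ladder_dist_lt b false (n - i) (n - (i - j)) ltac:(lia).
lia.
Qed.

End Bulk.

(* The 11 indices around j/2 and around (n+j)/2 that the lemmas of section Bulk
   leave undecided; near j/2 the distances do not depend on n. *)
Definition mid_window (r : rel nat) (b : bool) (j : nat) : nat :=
  count (fun i => r (ladder_dist b false i) (ladder_dist b true (distn i j)))
    (iota (j %/ 2 - 5) 11).

Definition anti_window (r : rel nat) (b : bool) (n j : nat) : nat :=
  count (nearer r n j b) (iota ((n + j) %/ 2 - 5) 11).

Section Windows.
Variables (r : rel nat) (b : bool).
Hypothesis r_SS : forall x y, r x.+1 y.+1 = r x y.

Lemma mid_window_shift j : 24 <= j -> mid_window r b (j + 8) = mid_window r b j.
Proof.
move=> j_ge; rewrite /mid_window (_ : (j + 8) %/ 2 - 5 = 4 + (j %/ 2 - 5)); last lia.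
rewrite iotaDl count_map; apply: eq_in_count => i; rewrite mem_iota => /andP [i_ge i_lt] /=.
rewrite (_ : distn (4 + i) (j + 8) = distn i j + 4) ?(addnC 4 i); last by rewrite /distn; lia.
by rewrite !ladder_dist_shift ?r_SS //; rewrite /distn; lia.
Qed.

Lemma anti_window_shift n j : j + 18 <= n -> anti_window r b (n + 8) j = anti_window r b n j.
Proof.
move=> jn; rewrite /anti_window (_ : (n + 8 + j) %/ 2 - 5 = 4 + ((n + j) %/ 2 - 5)); last lia.
rewrite iotaDl count_map; apply: eq_in_count => i; rewrite mem_iota => /andP [i_ge i_lt].
rewrite /= /nearer /gp4_dist /distn.
rewrite (_ : 4 + i - j + (j - (4 + i)) = (i - j + (j - i)) + 4); last lia.
rewrite (_ : n + 8 - (4 + i) = (n - i) + 4); last lia.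
rewrite (_ : n + 8 - (i - j + (j - i) + 4) = (n - (i - j + (j - i))) + 4); last lia.
by rewrite (addnC 4 i) !ladder_dist_shift ?minnSS ?r_SS //; lia.
Qed.

Lemma anti_window_diag n j : 31 <= j -> j + 18 <= n ->
  anti_window r b n j = anti_window r b (n - (j - 31)) 31.
Proof.
move=> j_ge jn; rewrite /anti_window.
rewrite (_ : (n + j) %/ 2 - 5 = (j - 31) + ((n - (j - 31) + 31) %/ 2 - 5)); last lia.
rewrite iotaDl count_map; apply: eq_in_count => i; rewrite mem_iota => /andP [i_ge i_lt].
rewrite /= /nearer !(gp4_dist_far b false) ?(gp4_dist_near b true); try by rewrite /distn; lia.
by congr (r (ladder_dist _ _ _) (ladder_dist _ _ _)); rewrite /distn; lia.
Qed.

End Windows.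

Lemma ltn_SS x y : ltn x.+1 y.+1 = ltn x y. Proof. by []. Qed.
Lemma gtn_SS x y : gtn x.+1 y.+1 = gtn x y. Proof. by []. Qed.

(* The offsets 4 * (j %/ 2 - 5) + 20 and 2 * j are those of the segments outside
   the windows in count_nearer_ltn and count_nearer_gtn; j %/ 2 - 5 is 0 for j = 8. *)
Definition mid_window_ok (j : nat) : bool :=
  mid_window ltn false j + mid_window ltn true j + 4 * (j %/ 2 - 5) + 20 <=
  mid_window gtn false j + mid_window gtn true j + 2 * j.

Definition anti_window_ok (n j : nat) : bool :=
  anti_window ltn false n j + anti_window ltn true n j + 2 + 2 * ((n + j) %% 2) <=
  anti_window gtn false n j + anti_window gtn true n j.

Lemma mid_window_bound j : admissible j -> mid_window_ok j.
Proof.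
move=> adm_j; have table : all mid_window_ok (8 :: iota 11 21) by vm_compute.
have [j_lt | j_ge] := ltnP j 32.
  by apply: (allP table); rewrite inE mem_iota; move: adm_j; rewrite /admissible; lia.
have j_ge24 : 24 <= j by lia.
have := allP table (24 + (j - 24) %% 8) ltac:(rewrite inE mem_iota; lia).
have per (r : rel nat) (r_SS : forall x y, r x.+1 y.+1 = r x y) b :=
  @eventually_periodic _ (mid_window r b) 24 8 (@mid_window_shift r b r_SS) j j_ge24.
by rewrite /mid_window_ok -!(per ltn ltn_SS) -!(per gtn gtn_SS); lia.
Qed.

Lemma anti_window_bound n j : admissible j -> j + 18 <= n -> anti_window_ok n j.
Proof.
have table : all (fun j => all (anti_window_ok^~ j) (iota (j + 18) 8)) (8 :: iota 11 21).
  by vm_compute.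
wlog j_le : n j / j <= 31 => [reduce adm_j jn | adm_j jn].
  have [j_le | j_gt] := leqP j 31; first exact: reduce.
  have := reduce (n - (j - 31)) 31 (leqnn _) isT ltac:(lia).
  have j_ge : 31 <= j by lia.
  rewrite /anti_window_ok !(anti_window_diag _ _ j_ge jn).
  by rewrite (_ : (n - (j - 31) + 31) %% 2 = (n + j) %% 2); last lia.
have j_in : j \in 8 :: iota 11 21.
  by rewrite inE mem_iota; move: adm_j; rewrite /admissible; lia.
have := allP (allP table j j_in) (j + 18 + (n - (j + 18)) %% 8) ltac:(rewrite mem_iota; lia).
have per (r : rel nat) (r_SS : forall x y, r x.+1 y.+1 = r x y) b :=
  @eventually_periodic _ (anti_window r b ^~ j) (j + 18) 8
    (fun m => @anti_window_shift r b r_SS m j) n jn.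
by rewrite /anti_window_ok -!(per ltn ltn_SS) -!(per gtn gtn_SS); lia.
Qed.

Section Count.
Variables (n j : nat) (b : bool).
Hypotheses (n_ge80 : 80 <= n) (adm_j : admissible j) (jj_le : j + j <= n + 8).

Lemma mid_window_eq r : count (nearer r n j b) (iota (j %/ 2 - 5) 11) = mid_window r b j.
Proof.
apply: eq_in_count => i; rewrite mem_iota => /andP [i_ge i_lt].
by rewrite /nearer !gp4_dist_near //; rewrite /distn; lia.
Qed.

Lemma count_nearer_segments r :
  count (nearer r n j b) (iota 0 n) =
  count (nearer r n j b) (iota 0 (j %/ 2 - 5)) + (mid_window r b j +
  (count (nearer r n j b) (iota (j %/ 2 - 5 + 11) ((n + j) %/ 2 - 5 - (j %/ 2 - 5 + 11))) +
  (anti_window r b n j +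
   count (nearer r n j b) (iota ((n + j) %/ 2 - 5 + 11) (n - ((n + j) %/ 2 - 5 + 11)))))).
Proof.
rewrite -mid_window_eq /anti_window -{2}(subn0 n).
rewrite (@count_iota_cut _ 0 (j %/ 2 - 5) n)
  ?(@count_iota_cut _ (j %/ 2 - 5) (j %/ 2 - 5 + 11) n)
  ?(@count_iota_cut _ (j %/ 2 - 5 + 11) ((n + j) %/ 2 - 5) n)
  ?(@count_iota_cut _ ((n + j) %/ 2 - 5) ((n + j) %/ 2 - 5 + 11) n) ?subn0 ?addKn //.
all: lia.
Qed.

Lemma count_nearer_ltn : count (nearer ltn n j b) (iota 0 n) =
  j %/ 2 - 5 + mid_window ltn b j + anti_window ltn b n j + (n - ((n + j) %/ 2 - 5 + 11)).
Proof.
rewrite count_nearer_segments.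
rewrite (@count_iota_all _ 0) => [|i /andP [_ i_lt]]; last by apply: nearer_u0_low => //; lia.
rewrite (@count_iota_none _ (j %/ 2 - 5 + 11)) => [|i /andP [i_ge i_lt]]; last first.
  by apply: nearer_gtn_ltnN; apply: nearer_vj_mid => //; lia.
rewrite (@count_iota_all _ ((n + j) %/ 2 - 5 + 11)) => [|i /andP [i_ge i_lt]]; last first.
  by apply: nearer_u0_high => //; lia.
lia.
Qed.

Lemma count_nearer_gtn : count (nearer gtn n j b) (iota 0 n) =
  mid_window gtn b j + ((n + j) %/ 2 - 5 - (j %/ 2 - 5 + 11)) + anti_window gtn b n j.
Proof.
rewrite count_nearer_segments.
rewrite (@count_iota_none _ 0) => [|i /andP [_ i_lt]]; last first.
  by apply: nearer_ltn_gtnN; apply: nearer_u0_low => //; lia.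
rewrite (@count_iota_all _ (j %/ 2 - 5 + 11)) => [|i /andP [i_ge i_lt]]; last first.
  by apply: nearer_vj_mid => //; lia.
rewrite (@count_iota_none _ ((n + j) %/ 2 - 5 + 11)) => [|i /andP [i_ge i_lt]]; last first.
  by apply: nearer_ltn_gtnN; apply: nearer_u0_high => //; lia.
lia.
Qed.

End Count.

Lemma near_count_lt n j : 80 <= n -> admissible j -> j + j <= n + 8 ->
  near_count ltn n j < near_count gtn n j.
Proof.
move=> n_ge80 adm_j jj_le; rewrite /near_count !count_nearer_ltn // !count_nearer_gtn //.
have := mid_window_bound adm_j; have := @anti_window_bound n j adm_j ltac:(lia).
rewrite /mid_window_ok /anti_window_ok; lia.
Qed.

Lemma card_GPvert_set n (P : bool -> nat -> bool) :
  #|[set v : GPvert n | P v.1 v.2]| = count (P false) (iota 0 n) + count (P true) (iota 0 n).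
Proof.
rewrite -sum1_card (eq_bigl (fun v : GPvert n => xpredT v.1 && P v.1 v.2)) => [|v]; last first.
  by rewrite in_set.
rewrite -(pair_big_dep xpredT (fun b (i : 'I_n) => P b i) (fun _ _ => 1)) big_bool /=.
rewrite -(big_mkord (P true) (fun=> 1)) -(big_mkord (P false) (fun=> 1)).
by rewrite -!sum1_count /index_iota subn0 addnC.
Qed.

Lemma card_W_GP4 n j (n_gt0 : 0 < n) (j_lt : j < n) : 24 <= n ->
  #|W (GP n 4) (false, Ordinal n_gt0) (true, Ordinal j_lt)| = near_count ltn n j /\
  #|W (GP n 4) (true, Ordinal j_lt) (false, Ordinal n_gt0)| = near_count gtn n j.
Proof.
move=> n_ge24; rewrite /W /near_count -!card_GPvert_set.
by split; apply: eq_card => v; rewrite !in_set /nearer !dist_GP4 //= /distn subn0 sub0n addn0.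
Qed.

Lemma diam_GP4_le n : 24 <= n -> diam (GP n 4) <= (n + 4) %/ 8 + 3.
Proof.
move=> n_ge24; apply/bigmax_leqP => [[b i]] _; apply/bigmax_leqP => [[c i']] _.
rewrite dist_GP4 //; apply: gp4_dist_bound => //=.
by rewrite /distn; have := ltn_ord i; have := ltn_ord i'; lia.
Qed.

(* An index j with d(u_0, v_j) = l; the exceptional values keep j admissible and
   2 j <= n + 8. *)
Definition partner (n l : nat) : nat :=
  if l == 3 then 8 else if l == 4 then 12 else
  if (l == (n + 4) %/ 8 + 2) && ((n %% 8 == 4) || (n %% 8 == 7)) then 4 * (l - 3) + 2
  else 4 * (l - 3) + 3.

Lemma partner_spec n l : 80 <= n -> 3 <= l <= (n + 4) %/ 8 + 2 ->
  [/\ gp4_dist n false true (partner n l) = l, admissible (partner n l) &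
      partner n l + partner n l <= n + 8].
Proof.
move=> n_ge80 l_range; rewrite /partner /gp4_dist /admissible /=.
case: eqP => [-> | l_ne3]; first by split; lia.
case: eqP => [-> | l_ne4]; first by split; lia.
case: ifP => [/andP [/eqP l_top n_mod] | not_top]; first by split; lia.
have {not_top} : ~ (l = (n + 4) %/ 8 + 2 /\ (n %% 8 = 4 \/ n %% 8 = 7)).
  by case=> l_top n_mod; move: not_top; rewrite l_top eqxx /=; case: n_mod => ->.
by split; lia.
Qed.

Definition partner_ok (n l : nat) : bool :=
  [&& partner n l < n, gp4_dist n false true (partner n l) == l &
      near_count ltn n (partner n l) < near_count gtn n (partner n l)].

Lemma partner_ok_small n l : 24 < n < 80 -> 3 <= l <= (n + 4) %/ 8 + 2 -> partner_ok n l.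
Proof.
move=> n_range l_range.
have table : all (fun n => all (partner_ok n) (iota 3 ((n + 4) %/ 8))) (iota 25 55).
  by vm_compute.
have /allP table_n := allP table n ltac:(rewrite mem_iota; lia).
by apply: table_n; rewrite mem_iota; lia.
Qed.

Theorem proposition3p3 (n : nat) : 24 < n ->
  forall l : nat, 3 <= l -> l < diam (GP n 4) ->
  ~ dist_balanced (GP n 4) l.
Proof.
move=> n_gt24 l l_ge3 l_lt_diam balanced.
have n_ge24 : 24 <= n by lia.
have l_range : 3 <= l <= (n + 4) %/ 8 + 2 by have := diam_GP4_le n_ge24; lia.
have /and3P [j_lt /eqP dist_j imbalance] : partner_ok n l.
  have [n_lt80 | n_ge80] := ltnP n 80; first by apply: partner_ok_small => //; lia.
  have [dist_j adm_j jj_le] := partner_spec n_ge80 l_range.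
  by rewrite /partner_ok dist_j eqxx near_count_lt // andbT; lia.
have n_gt0 : 0 < n by lia.
have [W_xy W_yx] := card_W_GP4 n_gt0 j_lt n_ge24.
have := balanced (false, Ordinal n_gt0) (true, Ordinal j_lt).
rewrite dist_GP4 //= /distn sub0n subn0 dist_j W_xy W_yx => /(_ erefl) eq_counts.
by move: imbalance; rewrite eq_counts ltnn.
Qed.
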